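(* Let $V$ be any vector space over a field $\mathbf{k}$ of characteristic zero. The assignment sending a twisted Poisson structure $\{\,,\}$ on $TV$ to the map $r\in\operatorname{End}(V\otimes V)$, $r(v\otimes w):=\{v,w\}$ for $v,w\in V$, is a bijection between twisted Poisson structures on $TV$ and elements $r\in\operatorname{End}(V\otimes V)$ that are skew, $r=-r^{21}$, and satisfy the classical Yang–Baxter equation $$[r^{12},r^{13}]-[r^{23},r^{12}]+[r^{13},r^{23}]=0\quad\text{in }\operatorname{End}(V^{\otimes 3}).$$
   Context: $TV=\bigoplus_{m\ge0}V^{\otimes m}$ is the tensor algebra with multiplication $\otimes$; for $x\in V^{\otimes m}$ write $|x|=m$, and $S_m$ acts on $V^{\otimes m}$ by permuting tensor factors. Block permutations: for $a,b,c\ge0$, $(21)^{a,b}$ is the linear map of $V^{\otimes(a+b)}$ with $x\otimes y\mapsto y\otimes x$ ($x\in V^{\otimes a},y\in V^{\otimes b}$); $(231)^{a,b,c}$, $(312)^{a,b,c}$, $(213)^{a,b,c}$ are the linear maps of $V^{\otimes(a+b+c)}$ with $x\otimes y\otimes z\mapsto z\otimes x\otimes y$, $x\otimes y\otimes z\mapsto y\otimes z\otimes x$, $x\otimes y\otimes z\mapsto y\otimes x\otimes z$ respectively ($x\in V^{\otimes a},y\in V^{\otimes b},z\in V^{\otimes c}$). A twisted Poisson structure on $TV$ is a bilinear map $\{\,,\}:TV\otimes TV\to TV$ with $\{V^{\otimes m},V^{\otimes n}\}\subset V^{\otimes(m+n)}$ such that for all homogeneous $u,v,w$: (skew-symmetry)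 $\{w,v\}=-(21)^{|v|,|w|}\{v,w\}$; (Jacobi) $\{u,\{v,w\}\}+(231)^{|v|,|w|,|u|}\{v,\{w,u\}\}+(312)^{|w|,|u|,|v|}\{w,\{u,v\}\}=0$; (Leibniz) $\{u\otimes v,w\}=u\otimes\{v,w\}+(213)^{|v|,|u|,|w|}(v\otimes\{u,w\})$. For $r\in\operatorname{End}(V\otimes V)$, $r^{ij}\in\operatorname{End}(V^{\otimes 3})$ denotes $r$ acting on the $i$-th and $j$-th tensor factors, and $r^{21}=PrP$ where $P(v\otimes w)=w\otimes v$. *)

(* The tensor algebra T(V) of a vector space V with basis B
   is modelled as the free vector space on words over B (the monoid algebra
   {malg k[seq B]}): the basis word [:: b1; ...; bm] stands for
   b1 (x) ... (x) bm, and V^{(x)m} is the span of the words of length m. *)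
From HB Require Import structures.
From mathcomp Require Import all_boot all_algebra.
From mathcomp Require Import finmap.
From mathcomp.multinomials Require Import monalg.

Set Implicit Arguments.
Unset Strict Implicit.
Unset Printing Implicit Defensive.

Import GRing.Theory.
Local Open Scope ring_scope.

Section TensorAlgebra.
Variables (k : fieldType) (B : choiceType).

Definition TV := {malg k[seq B]}.

Definition tw (w : seq B) : TV := << w >>.

Definition homog (m : nat) (x : TV) : Prop :=
  forall w, w \in msupp x -> size w = m.

Definition lin (f : seq B -> TV) (x : TV) : TV :=
  \sum_(w <- msupp x) x@_w *: f w.

Definition tens (x y : TV) : TV :=
  \sum_(a <- msupp x) \sum_(b <- msupp y) (x@_a * y@_b) *: tw (a ++ b).

(* block permutations; only ever applied to elements of the right degree *)
(* (21)^{a,b} : x(x)y |-> y(x)x, |x| = a, |y| = b *)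
Definition perm21 (a b : nat) : TV -> TV :=
  lin (fun w => tw (drop a w ++ take a w)).
(* (231)^{a,b,c} : x(x)y(x)z |-> z(x)x(x)y *)
Definition perm231 (a b c : nat) : TV -> TV :=
  lin (fun w => tw (drop (a + b) w ++ take (a + b) w)).
(* (312)^{a,b,c} : x(x)y(x)z |-> y(x)z(x)x *)
Definition perm312 (a b c : nat) : TV -> TV :=
  lin (fun w => tw (drop a w ++ take a w)).
(* (213)^{a,b,c} : x(x)y(x)z |-> y(x)x(x)z *)
Definition perm213 (a b c : nat) : TV -> TV :=
  lin (fun w => tw (take b (drop a w) ++ take a w ++ drop (a + b) w)).

Definition twisted_poisson (br : TV -> TV -> TV) : Prop :=
  (forall (c : k) x y z, br (c *: x + y) z = c *: br x z + br y z) /\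
      (forall (c : k) x y z, br z (c *: x + y) = c *: br z x + br z y) /\
      (forall m n x y, homog m x -> homog n y -> homog (m + n) (br x y)) /\
      (forall m n v w, homog m v -> homog n w ->
          br w v = - perm21 m n (br v w)) /\
      (forall p q s u v w, homog p u -> homog q v -> homog s w ->
          br u (br v w) + perm231 q s p (br v (br w u))
            + perm312 s p q (br w (br u v)) = 0) /\
      (forall p q s u v w, homog p u -> homog q v -> homog s w ->
          br (tens u v) w = tens u (br v w) + perm213 q p s (tens v (br u w))).

Definition r_of (br : TV -> TV -> TV) : TV -> TV :=
  lin (fun w => br (tw (take 1 w)) (tw (drop 1 w))).

(* r is an element of End(V(x)V): linear, maps V(x)V into V(x)V.
   (Only its restriction to V(x)V matters; elements of End(V(x)V) are
   compared on V(x)V.) *)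
Definition endo2 (r : TV -> TV) : Prop :=
  linear r /\ forall x, homog 2 x -> homog 2 (r x).

Definition P12 : TV -> TV := perm21 1 1.

Definition skew_r (r : TV -> TV) : Prop :=
  forall x, homog 2 x -> r x = - P12 (r (P12 x)).

Definition r12 (r : TV -> TV) : TV -> TV :=
  lin (fun w => tens (r (tw (take 2 w))) (tw (drop 2 w))).
Definition r23 (r : TV -> TV) : TV -> TV :=
  lin (fun w => tens (tw (take 1 w)) (r (tw (drop 1 w)))).
Definition P23 : TV -> TV :=
  lin (fun w => tw (take 1 w ++ take 1 (drop 2 w) ++ take 1 (drop 1 w))).
Definition r13 (r : TV -> TV) : TV -> TV :=
  fun x => P23 (r12 r (P23 x)).

Definition comm (f g : TV -> TV) : TV -> TV := fun x => f (g x) - g (f x).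

Definition CYBE (r : TV -> TV) : Prop :=
  forall x, homog 3 x ->
    comm (r12 r) (r13 r) x - comm (r23 r) (r12 r) x
      + comm (r13 r) (r23 r) x = 0.

End TensorAlgebra.

From HB Require Import structures.
From mathcomp Require Import all_boot all_algebra.
From mathcomp Require Import finmap.
From mathcomp.multinomials Require Import monalg.
From mathcomp Require Import zify.

(* A bilinear bracket on T(V) which is homogeneous, skew and satisfies the
   Leibniz rule is determined by its values on pairs of letters: the Leibniz
   rule splits the first argument into letters, and skew-symmetry moves the
   second argument to the first place.  Conversely, for any r the bracket of
   two words a and b defined as the sum, over all letters x of a and y of b,
   of the word a b in which x and y are replaced by r (x (x) y), is Leibniz,
   and it is skew when r is.  Finally, the Jacobiator J(a, b, c) of such a
   bracket is a derivation in a and is invariant under cyclic rotation of its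
   arguments, so it vanishes as soon as it vanishes on three letters x, y, z,
   where it is the left-hand side of the classical Yang-Baxter equation
   evaluated at x (x) y (x) z. *)

Set Implicit Arguments.
Unset Strict Implicit.
Unset Printing Implicit Defensive.

Import GRing.Theory.
Local Open Scope ring_scope.

Section LinearExtension.
Variables (k : fieldType) (B : choiceType).
Local Notation T := (TV k B).
Local Notation tw := (@tw k B).
Implicit Types (x y z : T) (f g : seq B -> T) (F G : T -> T).

Lemma linear_id_fun : linear (fun x : T => x). Proof. by []. Qed.

Lemma linear_zero_fun : linear (fun _ : T => 0 : T).
Proof. by move=> c x y; rewrite scaler0 addr0. Qed.

Lemma linear_comp_fun F G : linear F -> linear G -> linear (fun x => F (G x)).
Proof. by move=> hF hG c x y; rewrite hG hF. Qed.

Lemma linear_add_fun F G : linear F -> linear G -> linear (fun x => F x + G x).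
Proof. by move=> hF hG c x y; rewrite hF hG scalerDr addrACA. Qed.

Lemma linear_opp_fun F : linear F -> linear (fun x => - F x).
Proof. by move=> hF c x y; rewrite hF opprD scalerN. Qed.

Lemma lin_msupp_sub f x (d : {fset seq B}) : (msupp x `<=` d)%fset ->
  lin f x = \sum_(w <- d) x@_w *: f w.
Proof.
move=> hd; apply: big_fset_incl => // w _ hw.
by rewrite mcoeff_outdom // scale0r.
Qed.

Lemma linear_lin f : linear (lin f).
Proof.
move=> c x y; set d := (msupp x `|` msupp y)%fset.
have hxy : (msupp (c *: x + y) `<=` d)%fset.
  apply: fsubset_trans (msuppD_le _ _) _; apply: fsetUSS => //.
  exact: msuppZ_le.
rewrite (lin_msupp_sub _ (fsubsetUl _ _ : (msupp x `<=` d)%fset)).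
rewrite (lin_msupp_sub _ (fsubsetUr _ _ : (msupp y `<=` d)%fset)).
rewrite (lin_msupp_sub _ hxy) scaler_sumr -big_split; apply: eq_bigr => w _.
by rewrite mcoeffD mcoeffZ scalerDl scalerA.
Qed.

HB.instance Definition _ f := GRing.isLinear.Build k T T *:%R (lin f) (linear_lin f).

Lemma msupp_tw w : msupp (tw w) = [fset w]%fset.
Proof. by rewrite msuppU oner_eq0. Qed.

Lemma lin_tw f w : lin f (tw w) = f w.
Proof. by rewrite /lin msupp_tw big_seq_fset1 mcoeffUU scale1r. Qed.

Lemma lin_tw_id x : lin tw x = x.
Proof.
rewrite [RHS]monalgE; apply: eq_bigr => w _; apply/malgP => v.
by rewrite mcoeffZ !mcoeffU; case: eqP; rewrite ?mulr1 ?mulr0.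
Qed.

Lemma eq_lin f g x : {in msupp x, f =1 g} -> lin f x = lin g x.
Proof. by move=> h; apply: eq_big_seq => w /h ->. Qed.

Lemma lin_comp F f x : linear F -> F (lin f x) = lin (fun w => F (f w)) x.
Proof.
move=> hF; pose F' := HB.pack_for {linear T -> T} F (GRing.isLinear.Build k T T *:%R F hF).
change (F' (lin f x) = lin (fun w => F' (f w)) x).
by rewrite linear_sum; apply: eq_bigr => w _; rewrite linearZ.
Qed.

Lemma linear_linE F x : linear F -> F x = lin (fun w => F (tw w)) x.
Proof. by move=> hF; rewrite -{1}(lin_tw_id x) lin_comp. Qed.

Lemma linear_lin_param (f : seq B -> T -> T) x : (forall w, linear (f w)) ->
  linear (fun y => lin (f^~ y) x).
Proof.
move=> hf c y z; rewrite /lin scaler_sumr -big_split; apply: eq_bigr => w _ /=.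
by rewrite hf scalerDr !scalerA mulrC.
Qed.

Lemma linear_eq_homog m F G x : linear F -> linear G -> homog m x ->
  (forall w, size w = m -> F (tw w) = G (tw w)) -> F x = G x.
Proof.
move=> hF hG hx e; rewrite (linear_linE x hF) (linear_linE x hG).
by apply: eq_lin => w /hx /e.
Qed.

Lemma linear_eq_tw F G : linear F -> linear G ->
  (forall w, F (tw w) = G (tw w)) -> forall x, F x = G x.
Proof.
move=> hF hG e x; rewrite (linear_linE x hF) (linear_linE x hG).
by apply: eq_lin => w _.
Qed.

Lemma homog0 m : homog m (0 : T).
Proof. by move=> w; rewrite msupp0. Qed.

Lemma homogD m x y : homog m x -> homog m y -> homog m (x + y).
Proof.
by move=> hx hy w /(fsubsetP (msuppD_le _ _)); rewrite inE => /orP [/hx | /hy].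
Qed.

Lemma homogZ m (c : k) x : homog m x -> homog m (c *: x).
Proof. by move=> hx w /(fsubsetP (msuppZ_le _ _)) /hx. Qed.

Lemma homog_tw w : homog (size w) (tw w).
Proof. by move=> v; rewrite msupp_tw inE => /eqP ->. Qed.

Lemma homog_sum m (I : eqType) (s : seq I) (F : I -> T) :
  {in s, forall i, homog m (F i)} -> homog m (\sum_(i <- s) F i).
Proof.
elim: s => [|i s IH] h; first by rewrite big_nil; apply: homog0.
rewrite big_cons; apply: homogD; first by apply: h; rewrite mem_head.
by apply: IH => j hj; apply: h; rewrite in_cons hj orbT.
Qed.

Lemma homog_lin m f x : {in msupp x, forall w, homog m (f w)} -> homog m (lin f x).
Proof. by move=> h; apply: homog_sum => w /h /homogZ. Qed.

Lemma tensE x y : tens x y = lin (fun a => lin (fun b => tw (a ++ b)) y) x.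
Proof.
apply: eq_bigr => a _; rewrite scaler_sumr.
by apply: eq_bigr => b _; rewrite scalerA.
Qed.

Lemma bilinear_tens : bilinear_for *:%R *:%R (@tens k B).
Proof.
split=> [y | x] c u v; rewrite !tensE; first exact: linear_lin.
by apply: (linear_lin_param (f := fun a => lin (fun b => tw (a ++ b)))) => a; apply: linear_lin.
Qed.

HB.instance Definition _ :=
  bilinear_isBilinear.Build k T T T *:%R *:%R (@tens k B) bilinear_tens.
HB.instance Definition _ x :=
  GRing.isLinear.Build k T T *:%R (tens x) (bilinear_tens.2 x).

(* Instances of [linearDl], [linearNl] and [linear0l] keyed on [tens]: the
   generic lemmas match every binary application and make [rewrite] slow. *)
Lemma tensDl x y z : tens (x + y) z = tens x z + tens y z.
Proof. exact: linearDl. Qed.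

Lemma tensNl x z : tens (- x) z = - tens x z.
Proof. exact: linearNl. Qed.

Lemma tens0l z : tens 0 z = 0.
Proof. exact: linear0l. Qed.

Lemma tens_tw a b : tens (tw a) (tw b) = tw (a ++ b).
Proof. by rewrite tensE !lin_tw. Qed.

Lemma homog_tens m n x y : homog m x -> homog n y -> homog (m + n) (tens x y).
Proof.
move=> hx hy; rewrite tensE; apply: homog_lin => a /hx ha.
apply: homog_lin => b /hy hb; rewrite -ha -hb -size_cat; exact: homog_tw.
Qed.

End LinearExtension.

Arguments linear_id_fun {k B}.
Arguments linear_zero_fun {k B}.
Arguments homog_tw {k B} w.

Section BlockPermutations.
Variables (k : fieldType) (B : choiceType).
Local Notation T := (TV k B).
Local Notation tw := (@tw k B).
Implicit Types (x : T) (w : seq B).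

Definition swap_blocks (q a b : nat) : T -> T :=
  lin (fun w => tw (take q w ++ take b (drop (q + a) w) ++ take a (drop q w)
                    ++ drop (q + a + b) w)).

HB.instance Definition _ a b := GRing.isLinear.Build k T T *:%R
  (@perm21 k B a b) (linear_lin _).
HB.instance Definition _ a b c := GRing.isLinear.Build k T T *:%R
  (@perm231 k B a b c) (linear_lin _).
HB.instance Definition _ a b c := GRing.isLinear.Build k T T *:%R
  (@perm312 k B a b c) (linear_lin _).
HB.instance Definition _ a b c := GRing.isLinear.Build k T T *:%R
  (@perm213 k B a b c) (linear_lin _).
HB.instance Definition _ q a b := GRing.isLinear.Build k T T *:%R
  (swap_blocks q a b) (linear_lin _).
HB.instance Definition _ := GRing.isLinear.Build k T T *:%R
  (@P12 k B) (linear_lin _).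
HB.instance Definition _ := GRing.isLinear.Build k T T *:%R
  (@P23 k B) (linear_lin _).
HB.instance Definition _ r := GRing.isLinear.Build k T T *:%R
  (@r12 k B r) (linear_lin _).
HB.instance Definition _ r := GRing.isLinear.Build k T T *:%R
  (@r23 k B r) (linear_lin _).
HB.instance Definition _ br := GRing.isLinear.Build k T T *:%R
  (@r_of k B br) (linear_lin _).

Lemma linear_r13 r : linear (@r13 k B r).
Proof. by move=> c x y; rewrite /r13 !linearP. Qed.

HB.instance Definition _ r := GRing.isLinear.Build k T T *:%R
  (@r13 k B r) (linear_r13 r).

Lemma perm21_tw a b w : perm21 a b (tw w) = tw (drop a w ++ take a w).
Proof. exact: lin_tw. Qed.

Lemma perm231_tw a b c w : perm231 a b c (tw w) = tw (drop (a + b) w ++ take (a + b) w).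
Proof. exact: lin_tw. Qed.

Lemma perm312_tw a b c w : perm312 a b c (tw w) = tw (drop a w ++ take a w).
Proof. exact: lin_tw. Qed.

Lemma perm213_tw a b c w :
  perm213 a b c (tw w) = tw (take b (drop a w) ++ take a w ++ drop (a + b) w).
Proof. exact: lin_tw. Qed.

Lemma swap_blocks_tw q a b w : swap_blocks q a b (tw w) =
  tw (take q w ++ take b (drop (q + a) w) ++ take a (drop q w) ++ drop (q + a + b) w).
Proof. exact: lin_tw. Qed.

Lemma P12_tw w : P12 (tw w) = tw (drop 1 w ++ take 1 w).
Proof. exact: lin_tw. Qed.

Lemma P23_tw w : P23 (tw w) = tw (take 1 w ++ take 1 (drop 2 w) ++ take 1 (drop 1 w)).
Proof. exact: lin_tw. Qed.

Lemma r12_tw r w : r12 r (tw w) = tens (r (tw (take 2 w))) (tw (drop 2 w)).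
Proof. exact: lin_tw. Qed.

Lemma r23_tw r w : r23 r (tw w) = tens (tw (take 1 w)) (r (tw (drop 1 w))).
Proof. exact: lin_tw. Qed.

Lemma r_of_tw br w : r_of br (tw w) = br (tw (take 1 w)) (tw (drop 1 w)).
Proof. exact: lin_tw. Qed.

Definition twE := (lin_tw, tens_tw, perm21_tw, perm231_tw, perm312_tw, perm213_tw,
  swap_blocks_tw, P12_tw, P23_tw, r12_tw, r23_tw, r_of_tw).

Lemma tens_nil_l x : tens (tw [::]) x = x.
Proof. by apply: (linear_eq_tw (linearP _) linear_id_fun) => w /=; rewrite twE. Qed.

Lemma perm213_00 s x : perm213 0 0 s x = x.
Proof.
by apply: (linear_eq_tw (linearP _) linear_id_fun) => w /=; rewrite twE addn0 !take0 drop0.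
Qed.

End BlockPermutations.

Section Words.
Variable A : Type.
Implicit Types (s w : seq A).

Lemma take_size_catl s1 s2 : take (size s1) (s1 ++ s2) = s1.
Proof. exact: take_size_cat. Qed.

Lemma drop_size_catl s1 s2 : drop (size s1) (s1 ++ s2) = s2.
Proof. exact: drop_size_cat. Qed.

Lemma take_size_addn_cat s1 s2 n : take (size s1 + n) (s1 ++ s2) = s1 ++ take n s2.
Proof. by rewrite takeD take_size_catl drop_size_catl. Qed.

Lemma drop_size_addn_cat s1 s2 n : drop (size s1 + n) (s1 ++ s2) = drop n s2.
Proof. by rewrite addnC -drop_drop drop_size_catl. Qed.

Lemma seq_split2 w p q : size w = (p + q)%N ->
  exists w1 w2, [/\ w = w1 ++ w2, size w1 = p & size w2 = q].
Proof.
move=> hw; exists (take p w), (drop p w).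
by rewrite cat_take_drop size_takel ?hw ?leq_addr // size_drop hw addKn.
Qed.

Lemma seq_split3 w p q r : size w = (p + q + r)%N ->
  exists w1 w2 w3, [/\ w = w1 ++ w2 ++ w3, size w1 = p, size w2 = q & size w3 = r].
Proof.
move=> /seq_split2 [v [w3 [-> /seq_split2 [w1 [w2 [-> h1 h2]]] h3]]].
by exists w1, w2, w3; rewrite catA.
Qed.

End Words.

Ltac word_simpl :=
  repeat progress rewrite ?size_cat -?catA -?addnA ?take_size_catl ?drop_size_catl
    ?take_size_addn_cat ?drop_size_addn_cat ?take_size ?drop_size ?cats0 ?take0 ?drop0 /=.

Ltac split_word2 hw w1 w2 :=
  let e1 := fresh "e" in let e2 := fresh "e" in
  have [w1 [w2 [-> e1 e2]]] := seq_split2 hw; rewrite -?e1 -?e2.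

Ltac split_word3 hw w1 w2 w3 :=
  let e1 := fresh "e" in let e2 := fresh "e" in let e3 := fresh "e" in
  rewrite ?addnA in hw;
  have [w1 [w2 [w3 [-> e1 e2 e3]]]] := seq_split3 hw; rewrite -?e1 -?e2 -?e3.

Ltac linear_tac :=
  match goal with
  | |- linear (fun _ => 0) => exact: linear_zero_fun
  | |- linear (fun z => z) => exact: linear_id_fun
  | |- linear (fun z => @?F z + @?G z) =>
      apply: (linear_add_fun (F := F) (G := G)); linear_tac
  | |- linear (fun z => - @?F z) => apply: (linear_opp_fun (F := F)); linear_tac
  | |- linear (fun z => ?h (@?F z) ?y) =>
      apply: (linear_comp_fun (F := fun x => h x y) (G := F));
      [exact: linearPl | linear_tac]
  | |- linear (fun z => ?h (@?F z)) =>
      apply: (linear_comp_fun (F := h) (G := F));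
      [first [exact: linearP | exact: linearPr] | linear_tac]
  | |- linear _ => first [exact: linearP | exact: linearPr]
  end.

(* Reduce an equation between two expressions linear in [Z], where [Z] is
   homogeneous, to the case where [Z] is a basis word. *)
Ltac homog_ext Z hZ :=
  match goal with |- ?L = ?R =>
    let L' := eval pattern Z in L in
    let R' := eval pattern Z in R in
    lazymatch L' with ?F _ => lazymatch R' with ?G _ =>
      apply: (linear_eq_homog (F := F) (G := G) _ _ hZ);
      [linear_tac | linear_tac | cbv beta] end end end.

Ltac words_eq := rewrite /= !twE; congr tw; word_simpl.

Ltac expand := rewrite ?(linearD, linearN, linear0, tensDl, tensNl, tens0l,
  linearDr, linearNr, linear0r) /= ?opprK ?oppr0.

Ltac tw_simpl := repeat progress (rewrite /= ?twE; expand).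

Section BlockIdentities.
Variables (k : fieldType) (B : choiceType).
Local Notation T := (TV k B).
Local Notation tw := (@tw k B).
Implicit Types (U V W Y : T).

Lemma perm231_perm231 p q s W : homog (s + (p + q)) W ->
  perm231 q s p (perm231 s p q W) = perm312 s p q W.
Proof. by move=> hW; homog_ext W hW => w hw; split_word3 hw w1 w2 w3; words_eq. Qed.

Lemma perm231_perm312 p q s W : homog (p + (q + s)) W ->
  perm231 q s p (perm312 p q s W) = W.
Proof. by move=> hW; homog_ext W hW => w hw; split_word3 hw w1 w2 w3; words_eq. Qed.

Lemma perm231_tens_tw (a1 a2 : seq B) q s W : homog (q + (s + size a1)) W ->
  perm231 q s (size a1 + size a2) (tens W (tw a2)) =
  perm213 (size a2) (size a1) (q + s) (tens (tw a2) (perm231 q s (size a1) W)).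
Proof. by move=> hW; homog_ext W hW => w hw; split_word3 hw w1 w2 w3; words_eq. Qed.

Lemma perm231_swap_blocks_perm213 (a1 a2 : seq B) q s W : homog (q + (s + size a2)) W ->
  perm231 q s (size a1 + size a2)
    (swap_blocks q (size a1) s (perm213 (size a1) q (s + size a2) (tens (tw a1) W))) =
  tens (tw a1) (perm231 q s (size a2) W).
Proof. by move=> hW; homog_ext W hW => w hw; split_word3 hw w1 w2 w3; words_eq. Qed.

Lemma perm312_perm213_tens (a1 a2 : seq B) q s W : homog (s + (size a2 + q)) W ->
  perm312 s (size a1 + size a2) q (perm213 (size a1) s (size a2 + q) (tens (tw a1) W)) =
  tens (tw a1) (perm312 s (size a2) q W).
Proof. by move=> hW; homog_ext W hW => w hw; split_word3 hw w1 w2 w3; words_eq. Qed.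

Lemma perm312_swap_blocks_perm213 (a1 a2 : seq B) q s W : homog (s + (size a1 + q)) W ->
  perm312 s (size a1 + size a2) q
    (swap_blocks s (size a2) (size a1) (perm213 (size a2) s (size a1 + q) (tens (tw a2) W))) =
  perm213 (size a2) (size a1) (q + s) (tens (tw a2) (perm312 s (size a1) q W)).
Proof. by move=> hW; homog_ext W hW => w hw; split_word3 hw w1 w2 w3; words_eq. Qed.

Lemma perm231_perm213_perm21 (a1 a2 : seq B) q s Y V :
  homog (s + size a1) Y -> homog (size a2 + q) V ->
  perm231 q s (size a1 + size a2)
    (perm213 (s + size a1) q (size a2) (tens Y (perm21 (size a2) q V))) =
  perm312 s (size a1 + size a2) q (tens Y V).
Proof.
move=> hY hV; homog_ext Y hY => y hy; homog_ext V hV => v hv.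
by split_word2 hy y1 y2; split_word2 hv v1 v2; words_eq.
Qed.

Lemma perm231_swap_blocks_perm21 (a1 a2 : seq B) q s U Y :
  homog (size a1 + q) U -> homog (s + size a2) Y ->
  perm231 q s (size a1 + size a2) (swap_blocks q (size a1) s (tens (perm21 (size a1) q U) Y)) =
  perm312 s (size a1 + size a2) q (swap_blocks s (size a2) (size a1) (tens Y U)).
Proof.
move=> hU hY; homog_ext Y hY => y hy; homog_ext U hU => u hu.
by split_word2 hy y1 y2; split_word2 hu u1 u2; words_eq.
Qed.

End BlockIdentities.

Section YangBaxter.
Variables (k : fieldType) (B : choiceType).
Local Notation T := (TV k B).
Local Notation tw := (@tw k B).
Implicit Types (r : T -> T) (x : T).

Definition cybe r x :=
  comm (r12 r) (r13 r) x - comm (r23 r) (r12 r) x + comm (r13 r) (r23 r) x.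

Lemma linear_cybe r : linear (cybe r).
Proof. rewrite /cybe /comm; linear_tac. Qed.

HB.instance Definition _ r := GRing.isLinear.Build k T T *:%R (cybe r) (linear_cybe r).

Lemma skew_r_tw r : skew_r r -> forall a b : B, r (tw [:: b; a]) = - P12 (r (tw [:: a; b])).
Proof. by move=> r_skew a b; rewrite (r_skew _ (homog_tw [:: b; a])) /= twE. Qed.

End YangBaxter.

Lemma addr_jacobi_rearrange (V : zmodType) (a1 a2 a3 b1 b2 b3 c d : V) :
  a1 + b1 + (b2 - c + (- d + a2)) + (c + a3 + (d + b3))
  = a1 + a2 + a3 + (b1 + b2 + b3).
Proof.
rewrite !addrA [LHS](ACl (1*6*8*2*3*10*(4*7)*(5*9))%AC) /= !addNr !addr0.
by rewrite ?addrA.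
Qed.

Lemma addr_cybe_rearrange (V : zmodType) (a b c d e f : V) :
  a + b + (c - d) + (- e - f) = c - e - (f - a) + (b - d).
Proof. by rewrite opprB !addrA [LHS](ACl (3*5*1*6*2*4)%AC). Qed.

Section Bracket.
Variables (k : fieldType) (B : choiceType).
Local Notation T := (TV k B).
Local Notation tw := (@tw k B).
Implicit Types (a b c d : seq B) (x y u v w : T).

Record skew_leibniz (br : T -> T -> T) : Prop := SkewLeibniz {
  bracket_homog : forall {m n x y}, homog m x -> homog n y -> homog (m + n) (br x y);
  bracket_skew : forall {m n v w}, homog m v -> homog n w ->
    br w v = - perm21 m n (br v w);
  bracket_leibniz : forall {p q s u v w}, homog p u -> homog q v -> homog s w ->
    br (tens u v) w = tens u (br v w) + perm213 q p s (tens v (br u w))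
}.

Variable br : {bilinear T -> T -> T}.
Hypothesis brP : skew_leibniz br.
Local Notation br_homog := (bracket_homog brP).
Local Notation br_skew := (bracket_skew brP).
Local Notation br_leibniz := (bracket_leibniz brP).
Local Notation homog_br_tw a b := (br_homog (homog_tw a) (homog_tw b)).

Lemma br_nil_l x : br (tw [::]) x = 0.
Proof.
apply: (linear_eq_tw (linearPr _ _) linear_zero_fun) => c.
have := br_leibniz (homog_tw [::]) (homog_tw [::]) (homog_tw c).
rewrite !tens_nil_l perm213_00 => e.
by apply: (addrI (br (tw [::]) (tw c))); rewrite addr0 -e.
Qed.

Lemma br_nil_r x : br x (tw [::]) = 0.
Proof.
apply: (linear_eq_tw (linearPl _ _) linear_zero_fun) => c /=.
by rewrite (br_skew (homog_tw [::]) (homog_tw c)) br_nil_l linear0 oppr0.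
Qed.

(* Equations in [TV] are split with [apply: congr2] rather than [congr]: the
   latter tries conversion first, which unfolds finitely supported functions. *)
Lemma br_tw_catr a b c : br (tw c) (tw (a ++ b)) =
  tens (br (tw c) (tw a)) (tw b)
  + perm213 (size a) (size c) (size b) (tens (tw a) (br (tw c) (tw b))).
Proof.
rewrite -tens_tw (br_skew (homog_tens (homog_tw a) (homog_tw b)) (homog_tw c)).
rewrite (br_leibniz (homog_tw a) (homog_tw b) (homog_tw c)).
rewrite (br_skew (homog_tw c) (homog_tw b)) (br_skew (homog_tw c) (homog_tw a)).
expand; rewrite addrC; apply: congr2.
- homog_ext (br (tw c) (tw a)) (homog_br_tw c a) => w hw.
  by split_word2 hw w1 w2; words_eq.
- homog_ext (br (tw c) (tw b)) (homog_br_tw c b) => w hw.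
  by split_word2 hw w1 w2; words_eq.
Qed.

Lemma br_tensr p q s u v w : homog p u -> homog q v -> homog s w ->
  br w (tens u v) = tens (br w u) v + perm213 p s q (tens u (br w v)).
Proof.
move=> hu hv hw; homog_ext u hu => a ha; homog_ext v hv => b hb.
homog_ext w hw => c hc.
by rewrite /= tens_tw br_tw_catr ha hb hc.
Qed.

Lemma br_tw_perm213 p q s d Z : homog (p + q + s) Z ->
  br (tw d) (perm213 p q s Z) = swap_blocks (size d) p q (br (tw d) Z).
Proof.
move=> hZ; homog_ext Z hZ => z hz; split_word3 hz a b c.
rewrite /= twE; word_simpl.
rewrite (br_tw_catr b) (br_tw_catr a c) (br_tw_catr a (b ++ c)) (br_tw_catr b c).
expand; rewrite addrCA; apply: congr2; last apply: congr2.
- homog_ext (br (tw d) (tw a)) (homog_br_tw d a) => w hw.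
  by split_word2 hw w1 w2; words_eq.
- homog_ext (br (tw d) (tw b)) (homog_br_tw d b) => w hw.
  by split_word2 hw w1 w2; words_eq.
- homog_ext (br (tw d) (tw c)) (homog_br_tw d c) => w hw.
  by split_word2 hw w1 w2; words_eq.
Qed.

Definition jacobiator a b c : T :=
  br (tw a) (br (tw b) (tw c))
  + perm231 (size b) (size c) (size a) (br (tw b) (br (tw c) (tw a)))
  + perm312 (size c) (size a) (size b) (br (tw c) (br (tw a) (tw b))).

Lemma jacobiator_catl a1 a2 b c : jacobiator (a1 ++ a2) b c =
  tens (tw a1) (jacobiator a2 b c)
  + perm213 (size a2) (size a1) (size b + size c) (tens (tw a2) (jacobiator a1 b c)).
Proof.
rewrite /jacobiator size_cat -!tens_tw.
rewrite (br_leibniz (homog_tw a1) (homog_tw a2) (homog_br_tw b c)).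
rewrite (br_leibniz (homog_tw a1) (homog_tw a2) (homog_tw b)).
rewrite (br_tensr (homog_tw a1) (homog_tw a2) (homog_tw c)); expand.
rewrite (br_tensr (homog_br_tw c a1) (homog_tw a2) (homog_tw b)).
have h1 := homog_tens (homog_tw a1) (homog_br_tw c a2); rewrite addnA in h1.
rewrite (br_tw_perm213 b h1) (br_tensr (homog_tw a1) (homog_br_tw c a2) (homog_tw b)).
rewrite (br_tensr (homog_tw a1) (homog_br_tw a2 b) (homog_tw c)).
have h2 := homog_tens (homog_tw a2) (homog_br_tw a1 b); rewrite addnA in h2.
rewrite (br_tw_perm213 c h2) (br_tensr (homog_tw a2) (homog_br_tw a1 b) (homog_tw c)).
rewrite (br_skew (homog_tw a2) (homog_tw b)) (br_skew (homog_tw a1) (homog_tw b)); expand.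
rewrite (perm231_tens_tw a2 (br_homog (homog_tw b) (homog_br_tw c a1))).
rewrite (perm231_swap_blocks_perm213 a1 (br_homog (homog_tw b) (homog_br_tw c a2))).
rewrite (perm312_perm213_tens a1 (br_homog (homog_tw c) (homog_br_tw a2 b))).
rewrite (perm312_swap_blocks_perm213 a2 (br_homog (homog_tw c) (homog_br_tw a1 b))).
rewrite (perm231_perm213_perm21 (homog_br_tw c a1) (homog_br_tw a2 b)).
rewrite (perm231_swap_blocks_perm21 (homog_br_tw a1 b) (homog_br_tw c a2)).
exact: addr_jacobi_rearrange.
Qed.

Lemma jacobiator_rot a b c :
  jacobiator a b c = perm231 (size b) (size c) (size a) (jacobiator b c a).
Proof.
rewrite /jacobiator; expand.
rewrite (perm231_perm231 (br_homog (homog_tw c) (homog_br_tw a b))).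
rewrite (perm231_perm312 (br_homog (homog_tw a) (homog_br_tw b c))).
by rewrite [RHS]addrC addrA.
Qed.

Lemma jacobiator_nil_l b c : jacobiator [::] b c = 0.
Proof. by rewrite /jacobiator !br_nil_l br_nil_r; expand; rewrite !addr0. Qed.

Lemma jacobiator_letters_eq0 :
  (forall x y z : B, jacobiator [:: x] [:: y] [:: z] = 0) ->
  forall a b c, jacobiator a b c = 0.
Proof.
move=> h0 a b c; move: {2}(size a + size b + size c)%N (leqnn (size a + size b + size c)) => n.
elim: n a b c => [|n IH] a b c hn; first by case: a hn => // _; rewrite jacobiator_nil_l.
have long a' b' c' : (size a' + size b' + size c' <= n.+1)%N -> (1 < size a')%N ->
    jacobiator a' b' c' = 0.
  case: a' => [|x a'] //= h h2.
  by rewrite -cat1s jacobiator_catl (IH a') ?(IH [:: x]) /=; expand; rewrite ?addr0 //; lia.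
case: a hn => [|x [|x' a']] hn; [exact: jacobiator_nil_l | | exact: long].
rewrite jacobiator_rot; case: b hn => [|y [|y' b']] hn.
- by rewrite jacobiator_nil_l; expand.
- rewrite jacobiator_rot; case: c hn => [|z [|z' c']] hn.
  + by rewrite jacobiator_nil_l; expand.
  + by rewrite h0; expand.
  + by rewrite long; expand => //; move: hn => /=; lia.
- by rewrite long; expand => //; move: hn => /=; lia.
Qed.

Section Letters.
Variable r : {linear T -> T}.
Hypothesis r_homog : forall x, homog 2 x -> homog 2 (r x).
Hypothesis r_skew : skew_r r.
Hypothesis br_letters : forall x y : B, br (tw [:: x]) (tw [:: y]) = r (tw [:: x; y]).

Local Notation r_tw_swap := (skew_r_tw r_skew).

Local Ltac r_ext a b c d :=
  homog_ext (r (tw [:: a; b])) (r_homog (homog_tw [:: a; b])); case=> [|c [|d []]] // _.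

Lemma br_letter_br_letters (x y z : B) :
  br (tw [:: x]) (br (tw [:: y]) (tw [:: z])) =
  r12 r (r23 r (tw [:: x; y; z])) + r13 r (r23 r (tw [:: x; y; z])).
Proof.
rewrite br_letters twE /=.
r_ext y z c d.
rewrite (br_tw_catr [:: c] [:: d]) !br_letters /= !twE /= /r13 !twE /=.
by apply: congr2 => //; r_ext x d e f; rewrite /= !twE.
Qed.

Lemma perm231_br_letter_br_letters (x y z : B) :
  perm231 1 1 1 (r12 r (r23 r (tw [:: y; z; x])) + r13 r (r23 r (tw [:: y; z; x]))) =
  r12 r (r13 r (tw [:: x; y; z])) - r23 r (r13 r (tw [:: x; y; z])).
Proof.
rewrite /r13 /= !twE /= r_tw_swap.
r_ext x z c d.
expand; rewrite !twE /= [RHS]addrC; apply: congr2.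
- by apply: congr1; r_ext y d e f; tw_simpl.
- by rewrite (r_tw_swap y c); r_ext y c e f; tw_simpl.
Qed.

Lemma perm312_br_letter_br_letters (x y z : B) :
  perm312 1 1 1 (r12 r (r23 r (tw [:: z; x; y])) + r13 r (r23 r (tw [:: z; x; y]))) =
  - r13 r (r12 r (tw [:: x; y; z])) - r23 r (r12 r (tw [:: x; y; z])).
Proof.
rewrite /r13 /= !twE /=.
r_ext x y c d.
expand; rewrite !twE /=; apply: congr2.
- by rewrite (r_tw_swap c z); r_ext c z e f; tw_simpl.
- by rewrite (r_tw_swap d z); r_ext d z e f; tw_simpl.
Qed.

Lemma jacobiator_letters (x y z : B) :
  jacobiator [:: x] [:: y] [:: z] = cybe r (tw [:: x; y; z]).
Proof.
rewrite /jacobiator /= !br_letter_br_letters perm231_br_letter_br_letters.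
rewrite perm312_br_letter_br_letters /cybe /comm.
exact: addr_cybe_rearrange.
Qed.

End Letters.

End Bracket.

Section SumSplits.
Variables (k : fieldType) (B : choiceType).
Local Notation T := (TV k B).
Implicit Types (f g : seq B -> B -> seq B -> T) (p q a b : seq B).

(* [sum_splits f p a] is the sum of [f (p ++ a1) x a2] over all splittings
   [a = a1 ++ x :: a2]. *)
Fixpoint sum_splits f p a : T :=
  if a is x :: a' then f p x a' + sum_splits f (rcons p x) a' else 0.

Lemma eq_sum_splits f g p a :
  (forall p' x a', p' ++ x :: a' = p ++ a -> f p' x a' = g p' x a') ->
  sum_splits f p a = sum_splits g p a.
Proof.
elim: a p => [|x a IH] p e //=.
by rewrite e // (IH (rcons p x)) // => p' y a' e'; apply: e; rewrite e' cat_rcons.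
Qed.

Lemma homog_sum_splits m f p a :
  (forall p' x a', p' ++ x :: a' = p ++ a -> homog m (f p' x a')) ->
  homog m (sum_splits f p a).
Proof.
elim: a p => [|x a IH] p h /=; first exact: homog0.
apply: homogD; first exact: h.
by apply: IH => p' y a' e; apply: h; rewrite e cat_rcons.
Qed.

Lemma sum_splits_cat f p a b : sum_splits f p (a ++ b) =
  sum_splits (fun p' x a' => f p' x (a' ++ b)) p a + sum_splits f (p ++ a) b.
Proof.
elim: a p => [|x a IH] p /=; first by rewrite add0r cats0.
by rewrite IH -cat_rcons addrA.
Qed.

Lemma linear_sum_splits (F : T -> T) f p a : linear F ->
  F (sum_splits f p a) = sum_splits (fun p' x a' => F (f p' x a')) p a.
Proof.
move=> hF; pose F' := HB.pack_for {linear T -> T} F (GRing.isLinear.Build k T T *:%R F hF).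
change (F' (sum_splits f p a) = sum_splits (fun p' x a' => F' (f p' x a')) p a).
elim: a p => [|x a IH] p; first exact: linear0.
by rewrite [sum_splits f _ _]/= linearD IH.
Qed.

Lemma sum_splits_shift (F : T -> T) f g u p a : linear F ->
  (forall p' x a', f (u ++ p') x a' = F (g p' x a')) ->
  sum_splits f (u ++ p) a = F (sum_splits g p a).
Proof.
move=> hF e; rewrite linear_sum_splits //.
by elim: a p => [|x a IH] p //=; rewrite e -IH rcons_cat.
Qed.

Lemma sum_splitsD f g p a :
  sum_splits (fun p' x a' => f p' x a' + g p' x a') p a = sum_splits f p a + sum_splits g p a.
Proof.
elim: a p => [|x a IH] p /=; first by rewrite addr0.
by rewrite IH addrACA.
Qed.

Lemma sum_splits_exchange (G : seq B -> B -> seq B -> seq B -> B -> seq B -> T) p q a b :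
  sum_splits (fun p' x a' => sum_splits (G p' x a') q b) p a =
  sum_splits (fun q' y b' => sum_splits (fun p' x a' => G p' x a' q' y b') p a) q b.
Proof.
elim: a p => [|x a IH] p /=.
  by elim: b q => [|y b IHb] q //=; rewrite -IHb addr0.
by rewrite IH -sum_splitsD.
Qed.

End SumSplits.

Section RBracket.
Variables (k : fieldType) (B : choiceType).
Local Notation T := (TV k B).
Local Notation tw := (@tw k B).
Implicit Types (a b p q : seq B) (u v w : T).

Variable r : {linear T -> T}.

(* The word [p x a' q y b'] with the letters [x] and [y] replaced by the two
   tensor factors of [r (x (x) y)]. *)
Definition r_insert p (x : B) a' q (y : B) b' : T :=
  lin (fun cd => tw (p ++ take 1 cd ++ a' ++ q ++ drop 1 cd ++ b')) (r (tw [:: x; y])).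

Definition r_bracket_tw a b : T :=
  sum_splits (fun p x a' => sum_splits (r_insert p x a') [::] b) [::] a.

Definition r_bracket u v : T := lin (fun a => lin (r_bracket_tw a) v) u.

Lemma bilinear_r_bracket : bilinear_for *:%R *:%R r_bracket.
Proof.
split=> [v | u] c x y; first exact: linear_lin.
by apply: (linear_lin_param (f := fun a => lin (r_bracket_tw a))) => a; apply: linear_lin.
Qed.

HB.instance Definition _ :=
  bilinear_isBilinear.Build k T T T *:%R *:%R r_bracket bilinear_r_bracket.

Lemma r_bracket_tw_tw a b : r_bracket (tw a) (tw b) = r_bracket_tw a b.
Proof. by rewrite /r_bracket !lin_tw. Qed.

Lemma r_bracket_letters (x y : B) : r_bracket (tw [:: x]) (tw [:: y]) = r (tw [:: x; y]).
Proof.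
rewrite r_bracket_tw_tw /r_bracket_tw /= !addr0 -[RHS]lin_tw_id.
by apply: eq_lin => w _; rewrite /= cats0 cat_take_drop.
Qed.

Lemma r_of_r_bracket x : homog 2 x -> r_of r_bracket x = r x.
Proof.
move=> hx; homog_ext x hx => w; case: w => [|a [|b []]] // _.
by rewrite /= twE r_bracket_letters.
Qed.

Hypothesis r_homog : forall x, homog 2 x -> homog 2 (r x).
Hypothesis r_skew : skew_r r.

Lemma homog_r_bracket_tw a b : homog (size a + size b) (r_bracket_tw a b).
Proof.
apply: homog_sum_splits => p x a' /= ea; apply: homog_sum_splits => q y b' /= eb.
apply: homog_lin => w /(r_homog (homog_tw [:: x; y])).
case: w => [|c [|d []]] // _ /=.
have -> : (size a + size b)%N = size (p ++ c :: a' ++ q ++ d :: b').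
  by rewrite -ea -eb !size_cat /= !size_cat /=; lia.
exact: homog_tw.
Qed.

Lemma homog_r_bracket m n u v : homog m u -> homog n v -> homog (m + n) (r_bracket u v).
Proof.
move=> hu hv; apply: homog_lin => a /hu <-; apply: homog_lin => b /hv <-.
exact: homog_r_bracket_tw.
Qed.

Lemma r_insert_skew p x a' q y b' : r_insert p x a' q y b' =
  - perm21 (size (q ++ y :: b')) (size (p ++ x :: a')) (r_insert q y b' p x a').
Proof.
rewrite /r_insert (skew_r_tw r_skew x y).
homog_ext (r (tw [:: x; y])) (r_homog (homog_tw [:: x; y])) => w.
by case: w => [|c [|d []]] // _; tw_simpl; congr tw; word_simpl.
Qed.

Lemma r_bracket_tw_skew a b :
  r_bracket_tw a b = - perm21 (size b) (size a) (r_bracket_tw b a).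
Proof.
have hF : linear (fun z : T => - perm21 (size b) (size a) z) by linear_tac.
rewrite /r_bracket_tw (linear_sum_splits _ _ _ hF) sum_splits_exchange.
apply: eq_sum_splits => p x a' /= ea; rewrite (linear_sum_splits _ _ _ hF).
apply: eq_sum_splits => q y b' /= eb.
by rewrite r_insert_skew ea eb.
Qed.

Lemma r_bracket_tw_catl a1 a2 b : r_bracket_tw (a1 ++ a2) b =
  tens (tw a1) (r_bracket_tw a2 b)
  + perm213 (size a2) (size a1) (size b) (tens (tw a2) (r_bracket_tw a1 b)).
Proof.
rewrite /r_bracket_tw sum_splits_cat addrC; apply: congr2.
  rewrite -[[::] ++ a1](cats0 a1); apply: sum_splits_shift => [|p x a']; first exact: linearP.
  rewrite linear_sum_splits; last exact: linearP.
  apply: eq_sum_splits => q y b' _; rewrite /r_insert lin_comp; last exact: linearP.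
  by apply: eq_lin => w _; rewrite /= tens_tw -!catA.
have hF : linear (fun z : T => perm213 (size a2) (size a1) (size b) (tens (tw a2) z)).
  by linear_tac.
rewrite (linear_sum_splits _ _ _ hF); apply: eq_sum_splits => p x a' /= ea.
rewrite (linear_sum_splits _ _ _ hF); apply: eq_sum_splits => q y b' _.
rewrite /r_insert (lin_comp _ _ hF); apply: eq_lin => w.
move=> /(r_homog (homog_tw [:: x; y])); case: w => [|c [|d []]] // _ /=.
by rewrite !twE -ea; congr tw; word_simpl.
Qed.

Lemma skew_leibniz_r_bracket : skew_leibniz r_bracket.
Proof.
split=> [m n u v | m n v w hv hw | p q s u v w hu hv hw]; first exact: homog_r_bracket.
  homog_ext v hv => b hb; homog_ext w hw => a ha.
  by rewrite /= !r_bracket_tw_tw -hb -ha r_bracket_tw_skew.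
homog_ext u hu => a1 h1; homog_ext v hv => a2 h2; homog_ext w hw => b hb.
by rewrite /= tens_tw !r_bracket_tw_tw r_bracket_tw_catl h1 h2 hb.
Qed.

End RBracket.

Section Correspondence.
Variables (k : fieldType) (B : choiceType).
Local Notation T := (TV k B).
Local Notation tw := (@tw k B).
Implicit Types (br : T -> T -> T) (r : T -> T).

Lemma twisted_poisson_bilinear br : twisted_poisson br -> bilinear_for *:%R *:%R br.
Proof. by case=> hl [hr _]; split=> [y | x] c u v; [apply: hl | apply: hr]. Qed.

Definition bilinear_of br (hbr : twisted_poisson br) : {bilinear T -> T -> T} :=
  HB.pack_for {bilinear T -> T -> T} br
    (bilinear_isBilinear.Build k T T T *:%R *:%R br (twisted_poisson_bilinear hbr)).

Lemma twisted_poisson_skew_leibniz br : twisted_poisson br -> skew_leibniz br.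
Proof. by case=> _ [_ [hh [hs [_ hl]]]]; split. Qed.

Lemma twisted_poissonP (br : {bilinear T -> T -> T}) : skew_leibniz br ->
  (forall a b c, jacobiator br a b c = 0) -> twisted_poisson br.
Proof.
move=> brP hJ; split; first by move=> c x y z; apply: linearPl.
split; first by move=> c x y z; apply: linearPr.
split; first exact: bracket_homog brP.
split; first exact: bracket_skew brP.
split; last exact: bracket_leibniz brP.
move=> p q s u v w hu hv hw.
homog_ext u hu => a <-; homog_ext v hv => b <-; homog_ext w hw => c <-.
exact: hJ.
Qed.

Lemma skew_leibniz_eq (br1 br2 : {bilinear T -> T -> T}) :
  skew_leibniz br1 -> skew_leibniz br2 ->
  (forall x y : B, br1 (tw [:: x]) (tw [:: y]) = br2 (tw [:: x]) (tw [:: y])) ->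
  forall u v, br1 u v = br2 u v.
Proof.
move=> h1 h2 hl.
suff hw a b : br1 (tw a) (tw b) = br2 (tw a) (tw b).
  move=> u v; apply: (linear_eq_tw (linearPl br1 v) (linearPl br2 v)) => a.
  by apply: (linear_eq_tw (linearPr br1 (tw a)) (linearPr br2 (tw a))) => b.
move: {2}(size a + size b)%N (leqnn (size a + size b)) => n.
elim: n a b => [|n IH] a b hn.
  by case: a hn => // _; rewrite (br_nil_l h1) (br_nil_l h2).
have long a' b' : (size a' + size b' <= n.+1)%N -> (1 < size a')%N ->
    br1 (tw a') (tw b') = br2 (tw a') (tw b').
  case: a' => [|x a'] //= h h2'.
  rewrite -cat1s -tens_tw (bracket_leibniz h1 (homog_tw [:: x]) (homog_tw a') (homog_tw b')).
  rewrite (bracket_leibniz h2 (homog_tw [:: x]) (homog_tw a') (homog_tw b')).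
  by rewrite (IH a') ?(IH [:: x]) //=; lia.
case: a hn => [|x [|x' a']] hn; last exact: long.
  by rewrite (br_nil_l h1) (br_nil_l h2).
case: b hn => [|y [|y' b']] hn; first by rewrite (br_nil_r h1) (br_nil_r h2).
  exact: hl.
rewrite (bracket_skew h1 (homog_tw (y :: y' :: b')) (homog_tw [:: x])).
rewrite (bracket_skew h2 (homog_tw (y :: y' :: b')) (homog_tw [:: x])).
by rewrite long //; move: hn => /=; lia.
Qed.

Lemma r_of_twisted_poisson br : twisted_poisson br ->
  [/\ endo2 (r_of br), skew_r (r_of br) & CYBE (r_of br)].
Proof.
move=> hbr; have brP := twisted_poisson_skew_leibniz hbr.
have r_homog x : homog 2 x -> homog 2 (r_of br x).
  move=> hx; apply: homog_lin => w /hx; case: w => [|a [|b []]] // _.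
  exact: (bracket_homog brP (homog_tw [:: a]) (homog_tw [:: b])).
have r_skew : skew_r (r_of br).
  move=> x hx; homog_ext x hx => w; case: w => [|a [|b []]] // _.
  by rewrite /= !twE; apply: (bracket_skew brP (homog_tw [:: b]) (homog_tw [:: a])).
split=> //; first by split=> //; apply: linearP.
move=> x hx; change (cybe (r_of br) x = 0).
homog_ext x hx => w; case: w => [|a [|b [|c []]]] // _.
rewrite -(jacobiator_letters (br := bilinear_of hbr) brP r_homog r_skew) => [|x' y'].
  have [_ [_ [_ [_ [jacobi _]]]]] := hbr.
  exact: (jacobi _ _ _ _ _ _ (homog_tw [:: a]) (homog_tw [:: b]) (homog_tw [:: c])).
by rewrite /= twE.
Qed.

Lemma r_bracket_twisted_poisson r : endo2 r -> skew_r r -> CYBE r ->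
  exists br, twisted_poisson br /\ forall x, homog 2 x -> r_of br x = r x.
Proof.
move=> [hlin r_homog] r_skew hcybe.
pose r' := HB.pack_for {linear T -> T} r (GRing.isLinear.Build k T T *:%R r hlin).
have brP : skew_leibniz (r_bracket r') := skew_leibniz_r_bracket (r := r') r_homog r_skew.
exists (r_bracket r'); split; last exact: (r_of_r_bracket r').
apply: (twisted_poissonP brP) => a b c.
apply: (jacobiator_letters_eq0 brP) => x y z.
rewrite (jacobiator_letters (r := r') brP r_homog r_skew (r_bracket_letters r')).
exact: hcybe (homog_tw [:: x; y; z]).
Qed.

Lemma twisted_poisson_eq br1 br2 : twisted_poisson br1 -> twisted_poisson br2 ->
  (forall x, homog 2 x -> r_of br1 x = r_of br2 x) -> forall u v, br1 u v = br2 u v.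
Proof.
move=> h1 h2 hr.
apply: (skew_leibniz_eq (br1 := bilinear_of h1) (br2 := bilinear_of h2)).
- exact: twisted_poisson_skew_leibniz h1.
- exact: twisted_poisson_skew_leibniz h2.
- by move=> x y; have := hr _ (homog_tw [:: x; y]); rewrite !twE.
Qed.

End Correspondence.

Theorem theorem1p1 (k : fieldType) (hk : [pchar k]%R =i pred0) (B : choiceType) :
  (* the assignment lands in skew solutions of the CYBE in End(V(x)V) *)
  (forall br : TV k B -> TV k B -> TV k B, twisted_poisson br ->
     [/\ endo2 (r_of br), skew_r (r_of br) & CYBE (r_of br)]) /\
  (* injectivity *)
  (forall br1 br2 : TV k B -> TV k B -> TV k B,
     twisted_poisson br1 -> twisted_poisson br2 ->
     (forall x, homog 2 x -> r_of br1 x = r_of br2 x) ->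
     forall u v, br1 u v = br2 u v) /\
  (* surjectivity *)
  (forall r : TV k B -> TV k B, endo2 r -> skew_r r -> CYBE r ->
     exists br : TV k B -> TV k B -> TV k B,
       twisted_poisson br /\ forall x, homog 2 x -> r_of br x = r x).
Proof.
split; first exact: r_of_twisted_poisson.
by split; [exact: twisted_poisson_eq | exact: r_bracket_twisted_poisson].
Qed.
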